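(* Let $p$ be a prime, $q$ a power of $p$, $n\ge1$ odd, $m=\frac{q^n+1}{q+1}$. For $g\in B(Q_\infty)$ let $N(g)$ be the number of places $Q_{\alpha\beta}$ of $\mathcal C_n$ with $g(Q_{\alpha\beta})=Q_{\alpha\beta}$. Then $N(g)$ equals the number of places $P_{\alpha\beta}$ of $\mathbb{F}_{q^{2n}}(x,y)$ with $\pi(g)(P_{\alpha\beta})=P_{\alpha\beta}$.
   Context: Let $\mathcal C_n=\mathbb{F}_{q^{2n}}(x,y,z)$ be the function field defined by $x^q+x=y^{q+1}$ and $z^m=y^{q^2}-y$. Let $B(Q_\infty)$ be the group of automorphisms $[a,b,c,d]$ of $\mathcal C_n$ given by $x\mapsto a^{q+1}x+ab^qy+c$, $y\mapsto ay+b$, $z\mapsto dz$, where $a\in\mathbb{F}_{q^2}^*$, $b,c\in\mathbb{F}_{q^2}$, $c^q+c=b^{q+1}$, $d\in\mathbb{F}_{q^{2n}}$, $d^m=a$. Let $\pi(g)$ denote the restriction of $g=[a,b,c,d]$ to the subfield $\mathbb{F}_{q^{2n}}(x,y)$ (given by $x\mapsto a^{q+1}x+ab^qy+c$, $y\mapsto ay+b$). For $\alpha,\beta\in\mathbb{F}_{q^2}$ with $\alpha^q+\alpha=\beta^{q+1}$, let $P_{\alpha\beta}$ be the place of $\mathbb{F}_{q^{2n}}(x,y)$ that is the common zero of $x-\alpha$ and $y-\beta$; it is totally ramified in $\mathcal C_n/\mathbb{F}_{q^{2n}}(x,y)$, and $Q_{\alpha\beta}$ denotes the unique place of $\mathcal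 C_n$ above it. *)

From HB Require Import structures.
From mathcomp Require Import all_boot all_order all_algebra.
From mathcomp Require Import boolp classical_sets.
Set Implicit Arguments. Unset Strict Implicit. Unset Printing Implicit Defensive.
Import GRing.Theory.
Local Open Scope ring_scope.
Local Open Scope classical_set_scope.

Section FunctionFields.
Variables (K : finFieldType) (F : fieldType) (iota : {rmorphism K -> F}).

Definition subfield_over (S : set F) : Prop :=
  [/\ forall k : K, S (iota k),
      forall u v, S u -> S v -> S (u - v),
      forall u v, S u -> S v -> S (u * v)
    & forall u, S u -> S u^-1].

Definition gen_subfield (ts : seq F) : set F :=
  [set f | forall S : set F, subfield_over S -> (forall t, t \in ts -> S t) -> S f].

Definition valuation_ring (E O : set F) : Prop :=
  [/\ O `<=` E, (forall k : K, O (iota k)),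
      (forall u v, O u -> O v -> O (u - v) /\ O (u * v)),
      (exists f, E f /\ ~ O f)
    & forall f, E f -> f <> 0 -> O f \/ O f^-1].

Definition is_place (E P : set F) : Prop :=
  exists O, valuation_ring E O /\ P = [set f | O f /\ (f = 0 \/ ~ O f^-1)].

Definition is_P_ab (x y : F) (alpha beta : K) (P : set F) : Prop :=
  is_place (gen_subfield [:: x; y]) P /\
  P (x - iota alpha) /\ P (y - iota beta).

(* Q is a place of F (= K(x,y,z)) lying above P_{alpha beta}. *)
Definition is_Q_ab (x y : F) (alpha beta : K) (Q : set F) : Prop :=
  is_place setT Q /\ is_P_ab x y alpha beta (Q `&` gen_subfield [:: x; y]).

End FunctionFields.

(* Fix a rational pair (α, β) and write P = P_αβ.  Restricting a g-fixed place of C_n above P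
   to K(x, y) gives a g-fixed P.  Conversely, let P be fixed by g.  Since x - α and y - β lie in P,
   the constant terms of g(x - α) and g(y - β) vanish, so g maps x - α and y - β to linear
   combinations of themselves.  By Chevalley's extension theorem (Zorn's lemma on pairs made of
   a subring and a proper ideal of it) P lies under a place Q of C_n, and g^-1(O_Q) is again a
   valuation ring whose maximal ideal contains x - α and y - β.  There is only one such valuation
   ring: read at (α, β) the curve equations become (x - α) u_x = (y - β) s_y and
   (y - β) u_y = z^m with u_x, u_y units at every such place, so peeling off constant terms
   writes every nonzero element of the coordinate ring K[x, y, z] as z^k times a unit of both
   rings; as C_n is the fraction field of K[x, y, z], membership is decided by the sign of the
   z-exponent alone.  Hence g(O_Q) = O_Q, i.e. Q is fixed. *)

From HB Require Import structures.
From mathcomp Require Import all_boot all_order all_algebra.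
From mathcomp Require Import boolp classical_sets.
From mathcomp Require Import ring.
From mathcomp Require Import finfield.
Import GRing.Theory.
Local Open Scope ring_scope.
Set Implicit Arguments. Unset Strict Implicit. Unset Printing Implicit Defensive.

(** * Subrings and valuation rings *)

Section Subrings.
Variables (K : finFieldType) (F : fieldType) (iota : {rmorphism K -> F}).

Definition subring_over (S : set F) : Prop :=
  [/\ forall k : K, S (iota k), forall u v, S u -> S v -> S (u - v)
    & forall u v, S u -> S v -> S (u * v)].

Definition gen_subring (ts : seq F) : set F :=
  [set f | forall S, subring_over S -> (forall t, t \in ts -> S t) -> S f]%classic.

Section SubringTheory.
Variables (S : set F) (srS : subring_over S).

Lemma subring_cst k : S (iota k). Proof. by case: srS. Qed.
Lemma subringB u v : S u -> S v -> S (u - v). Proof. by case: srS => _ h _; apply: h. Qed.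
Lemma subringM u v : S u -> S v -> S (u * v). Proof. by case: srS => _ _ h; apply: h. Qed.
Lemma subring0 : S 0. Proof. by rewrite -(rmorph0 iota); apply: subring_cst. Qed.
Lemma subring1 : S 1. Proof. by rewrite -(rmorph1 iota); apply: subring_cst. Qed.
Lemma subringN u : S u -> S (- u).
Proof. by move=> Su; rewrite -sub0r; apply: subringB => //; apply: subring0. Qed.
Lemma subringD u v : S u -> S v -> S (u + v).
Proof. by move=> Su Sv; rewrite -[v]opprK; apply: subringB => //; apply: subringN. Qed.
Lemma subringX u i : S u -> S (u ^+ i).
Proof.
move=> Su; elim: i => [|i IH]; first by rewrite expr0; apply: subring1.
by rewrite exprS; apply: subringM.
Qed.
Lemma subring_sum (I : Type) (r : seq I) (P : pred I) (f : I -> F) :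
  (forall i, P i -> S (f i)) -> S (\sum_(i <- r | P i) f i).
Proof. by move=> Sf; apply: (big_ind S) => //; [exact: subring0 | exact: subringD]. Qed.
Lemma subring_horner (p : {poly F}) u : (forall i, S p`_i) -> S u -> S p.[u].
Proof.
move=> Sp Su; rewrite horner_coef; apply: subring_sum => i _.
by apply: subringM => //; apply: subringX.
Qed.

End SubringTheory.

Lemma gen_subring_subring ts : subring_over (gen_subring ts).
Proof.
split.
- by move=> k S srS _; apply: (subring_cst srS).
- by move=> u v Su Sv S srS Sts; apply: (subringB srS); [apply: Su | apply: Sv].
- by move=> u v Su Sv S srS Sts; apply: (subringM srS); [apply: Su | apply: Sv].
Qed.

Lemma gen_subring_mem ts t : t \in ts -> gen_subring ts t.
Proof. by move=> tts S _; apply. Qed.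

Lemma subfield_subring E : subfield_over iota E -> subring_over E.
Proof. by case=> *; split. Qed.
Lemma subfieldV E u : subfield_over iota E -> E u -> E u^-1.
Proof. by case=> _ _ _; apply. Qed.
Lemma subfield_setT : subfield_over iota setT.
Proof. by split. Qed.

Lemma gen_subfield_subfield ts : subfield_over iota (gen_subfield iota ts).
Proof.
split.
- by move=> k S [Sk _ _ _] _; apply: Sk.
- by move=> u v Su Sv S sfS Sts; case: (sfS) => _ SB _ _; apply: SB; [apply: Su | apply: Sv].
- by move=> u v Su Sv S sfS Sts; case: (sfS) => _ _ SM _; apply: SM; [apply: Su | apply: Sv].
- by move=> u Su S sfS Sts; case: (sfS) => _ _ _ SV; apply: SV; apply: Su.
Qed.

Lemma gen_subfield_mem ts t : t \in ts -> gen_subfield iota ts t.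
Proof. by move=> tts S _; apply. Qed.

Definition max_ideal (O : set F) : set F := [set f | O f /\ (f = 0 \/ ~ O f^-1)]%classic.

Definition vunit (O : set F) (u : F) : Prop := O u /\ ~ max_ideal O u.

Section ValuationRing.
Variables (E O : set F) (sfE : subfield_over iota E) (vO : valuation_ring iota E O).

Lemma valuation_subring : subring_over O.
Proof. by case: vO => _ Ok OBM _ _; split => // u v Ou Ov; have [] := OBM u v Ou Ov. Qed.
Let srO := valuation_subring.

Lemma valuation_sub u : O u -> E u. Proof. by case: vO => + _ _ _ _; apply. Qed.
Lemma valuation_total u : E u -> u <> 0 -> O u \/ O u^-1. Proof. by case: vO => _ _ _ _; apply. Qed.

Lemma max_ideal_sub u : max_ideal O u -> O u. Proof. by case. Qed.
Lemma max_ideal0 : max_ideal O 0. Proof. by split; [apply: subring0 srO | left]. Qed.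
Lemma max_ideal1 : ~ max_ideal O 1.
Proof. by case=> _ [/eqP|]; [rewrite oner_eq0 | rewrite invr1; apply; apply: subring1 srO]. Qed.
Lemma max_ideal_inv u : max_ideal O u -> u <> 0 -> ~ O u^-1. Proof. by case=> _ [->|]. Qed.

Lemma max_idealMl r u : O r -> max_ideal O u -> max_ideal O (r * u).
Proof.
move=> Or [Ou Ou']; split; first exact: (subringM srO Or Ou).
have [->|ru0] := eqVneq (r * u) 0; [by left | right => Oru'].
move: ru0; rewrite mulf_eq0 negb_or => /andP[/eqP r0 /eqP u0].
case: Ou' => // []; apply.
have -> : u^-1 = r * (r * u)^-1 by rewrite invfM mulrA mulfV ?mul1r //; apply/eqP.
exact: (subringM srO Or Oru').
Qed.

(* The case split on whether [u / v] or its inverse lies in [O] is where the valuation property enters. *)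
Lemma max_idealD u v : max_ideal O u -> max_ideal O v -> max_ideal O (u + v).
Proof.
move=> mu mv; split; first exact: (subringD srO (max_ideal_sub mu) (max_ideal_sub mv)).
have [->|uv0] := eqVneq (u + v) 0; [by left | right => Ouv'].
have [u0|u0] := eqVneq u 0.
  by move: Ouv'; rewrite u0 add0r; apply: (max_ideal_inv mv) => v0; move: uv0; rewrite u0 v0 addr0 eqxx.
have [v0|v0] := eqVneq v 0.
  by move: Ouv'; rewrite v0 addr0; apply: (max_ideal_inv mu) => /eqP; rewrite (negPf u0).
have Euv : E (u / v).
  apply: (subringM (subfield_subring sfE)); first exact: valuation_sub (max_ideal_sub mu).
  by apply: subfieldV => //; apply: valuation_sub (max_ideal_sub mv).
have uv_neq0 : u / v <> 0 by apply/eqP; rewrite mulf_eq0 invr_eq0 negb_or u0 v0.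
have Ouv1 w : O w -> O ((u + v)^-1 * (w + 1)).
  by move=> Ow; apply: (subringM srO) => //; apply: (subringD srO) => //; apply: subring1 srO.
case: (valuation_total Euv uv_neq0) => /Ouv1 Ow.
- apply: (max_ideal_inv mv); first exact/eqP.
  by suff -> : v^-1 = (u + v)^-1 * (u / v + 1) by []; field; rewrite ?u0 ?v0 ?uv0.
- apply: (max_ideal_inv mu); first exact/eqP.
  by suff -> : u^-1 = (u + v)^-1 * ((u / v)^-1 + 1) by []; field; rewrite ?u0 ?v0 ?uv0.
Qed.

Lemma max_idealN u : max_ideal O u -> max_ideal O (- u).
Proof. by move=> mu; rewrite -mulN1r; apply: max_idealMl => //; apply: subringN srO _ (subring1 srO). Qed.
Lemma max_idealB u v : max_ideal O u -> max_ideal O v -> max_ideal O (u - v).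
Proof. by move=> mu mv; apply: max_idealD => //; apply: max_idealN. Qed.

Lemma max_idealX u n : max_ideal O u -> (0 < n)%N -> max_ideal O (u ^+ n).
Proof.
move=> mu; case: n => // n _; rewrite exprSr.
exact: (max_idealMl (subringX srO n (max_ideal_sub mu)) mu).
Qed.

Lemma vunitP u : vunit O u -> u <> 0 /\ O u^-1.
Proof.
move=> [Ou nmu]; have u0 : u <> 0 by move=> u0; apply: nmu; rewrite u0; apply: max_ideal0.
by split => //; case: (pselect (O u^-1)) => // Ou'; exfalso; apply: nmu; split => //; right.
Qed.
Lemma vunit_neq0 u : vunit O u -> u != 0. Proof. by move/vunitP => [/eqP]. Qed.
Lemma vunitI u : u <> 0 -> O u -> O u^-1 -> vunit O u.
Proof. by move=> u0 Ou Ou'; split => // mu; apply: (max_ideal_inv mu). Qed.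
Lemma vunit1 : vunit O 1.
Proof. by apply: vunitI; rewrite ?invr1; [exact/eqP/oner_neq0 | apply: (subring1 srO) ..]. Qed.
Lemma vunitN u : vunit O u -> vunit O (- u).
Proof.
move=> [Ou nmu]; split; first exact: (subringN srO).
by move=> /max_idealN; rewrite opprK.
Qed.
Lemma vunitD u j : vunit O u -> max_ideal O j -> vunit O (u + j).
Proof.
move=> [Ou nmu] mj; split; first exact: (subringD srO Ou (max_ideal_sub mj)).
by move=> muj; apply: nmu; rewrite -(addrK j u); apply: max_idealB.
Qed.
Lemma vunit_cst k : k != 0 -> vunit O (iota k).
Proof.
move=> k0; apply: vunitI; [by apply/eqP; rewrite fmorph_eq0 | exact: (subring_cst srO) |].
by rewrite -fmorphV; apply: (subring_cst srO (k^-1)).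
Qed.
Lemma max_ideal_cst k : max_ideal O (iota k) -> k = 0.
Proof. by move=> mk; apply/eqP; apply: contraLR isT => /vunit_cst []. Qed.
Lemma vunitM u v : vunit O u -> vunit O v -> vunit O (u * v).
Proof.
move=> uu uv; have [u0 Ou'] := vunitP uu; have [v0 Ov'] := vunitP uv.
apply: vunitI; first by apply/eqP; rewrite mulf_neq0 //; apply/eqP.
  by apply: (subringM srO); [case: uu | case: uv].
by rewrite invfM; apply: (subringM srO).
Qed.
Lemma vunitV u : vunit O u -> vunit O u^-1.
Proof.
move=> uu; have [u0 Ou'] := vunitP uu.
by apply: vunitI; [apply/eqP; rewrite invr_eq0; apply/eqP | | rewrite invrK; case: uu].
Qed.

End ValuationRing.
End Subrings.

(** * Chevalley's extension theorem *)

Lemma horner_rev_tail (R : fieldType) (r : {poly R}) (g : R) k : g != 0 -> size r = k.+1 ->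
  g ^+ k * (r.[g^-1] - r`_0) = (\poly_(i < k) r`_(k - i)).[g].
Proof.
move=> g0 sr; rewrite horner_coef sr big_ord_recl /= expr0 mulr1 addrAC subrr add0r.
rewrite horner_poly mulr_sumr (reindex_inj rev_ord_inj) /=; apply: eq_bigr => i _.
rewrite /bump /= add1n subnSK ?ltn_ord // mulrCA exprVn -expfB_cond ?(negPf g0) ?leq_subr //.
by rewrite subKn // (ltnW (ltn_ord i)).
Qed.

Section Chevalley.
Variables (K : finFieldType) (F : fieldType) (iota : {rmorphism K -> F}).

Definition proper_ideal_of (B I : set F) : Prop :=
  [/\ subring_over iota B, (I `<=` B)%classic, I 0,
      (forall u v, I u -> I v -> I (u - v))
    & (forall r u, B r -> I u -> I (r * u))] /\ ~ I 1.

Definition eval_polys (S : set F) (f : F) : set F :=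
  [set w | exists p : {poly F}, (forall i, S p`_i) /\ w = p.[f]]%classic.

Section ProperIdeal.
Variables (B I : set F) (pBI : proper_ideal_of B I).

Lemma proper_subring : subring_over iota B. Proof. by case: pBI => -[]. Qed.
Lemma proper_sub u : I u -> B u. Proof. by case: pBI => -[_ + _ _ _] _; apply. Qed.
Lemma proper0 : I 0. Proof. by case: pBI => -[]. Qed.
Lemma properB u v : I u -> I v -> I (u - v). Proof. by case: pBI => -[_ _ _ + _] _; apply. Qed.
Lemma properMl r u : B r -> I u -> I (r * u). Proof. by case: pBI => -[_ _ _ _ +] _; apply. Qed.
Lemma proper_neq1 : ~ I 1. Proof. by case: pBI. Qed.
Lemma properN u : I u -> I (- u).
Proof. by move=> Iu; rewrite -sub0r; apply: properB => //; apply: proper0. Qed.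
Lemma properD u v : I u -> I v -> I (u + v).
Proof. by move=> Iu Iv; rewrite -[v]opprK; apply: properB => //; apply: properN. Qed.
Lemma proper_sum (J : Type) (r : seq J) (P : pred J) (f : J -> F) :
  (forall i, P i -> I (f i)) -> I (\sum_(i <- r | P i) f i).
Proof. by move=> If; apply: (big_ind I) => //; [exact: proper0 | exact: properD]. Qed.

End ProperIdeal.

Section MaximalPair.
Variables (B M : set F) (pBM : proper_ideal_of B M).
Hypothesis maxBM : forall B' I', proper_ideal_of B' I' -> (B `<=` B')%classic -> (M `<=` I')%classic ->
   (B' `<=` B)%classic /\ (I' `<=` M)%classic.

Let srB := proper_subring pBM.

Lemma maximal_comaximal b : B b -> ~ M b -> exists m r, [/\ M m, B r & 1 = m + b * r].
Proof.
move=> Bb nMb; case: (pselect (exists m r, [/\ M m, B r & 1 = m + b * r])) => // no1.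
pose I' := [set w | exists m r, [/\ M m, B r & w = m + b * r]]%classic.
have MI' u : M u -> I' u by move=> Mu; exists u, 0; split; rewrite ?mulr0 ?addr0 //; apply: subring0 srB.
have pI' : proper_ideal_of B I'.
  split; [split => // | by move=> [m [r [Mm Br e]]]; apply: no1; exists m, r].
  - move=> w [m [r [Mm Br ->]]]; apply: (subringD srB); first exact: proper_sub pBM _ Mm.
    exact: (subringM srB).
  - exact/MI'/(proper0 pBM).
  - move=> u v [m [r [Mm Br ->]]] [m' [r' [Mm' Br' ->]]].
    by exists (m - m'), (r - r'); split; [exact: (properB pBM) | exact: (subringB srB) | ring].
  - move=> s u Bs [m [r [Mm Br ->]]].
    by exists (s * m), (s * r); split; [exact: (properMl pBM) | exact: (subringM srB) | ring].
have [_ I'M] := maxBM pI' (fun u Bu => Bu) MI'.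
exfalso; apply: nMb; apply: I'M; exists 0, 1.
by split; rewrite ?mulr1 ?add0r //; [apply: proper0 pBM | apply: subring1 srB].
Qed.

Lemma maximal_primeM u v : B u -> B v -> ~ M u -> ~ M v -> ~ M (u * v).
Proof.
move=> Bu Bv nMu nMv Muv.
have [m1 [r1 [Mm1 Br1 e1]]] := maximal_comaximal Bu nMu.
have [m2 [r2 [Mm2 Br2 e2]]] := maximal_comaximal Bv nMv.
apply: (proper_neq1 pBM).
have -> : 1 = m1 * m2 + m1 * (v * r2) + u * r1 * m2 + r1 * r2 * (u * v).
  by rewrite -[1]mulr1 {1}e1 e2; ring.
apply: (properD pBM); [apply: (properD pBM); [apply: (properD pBM)|]|].
- exact: (properMl pBM (proper_sub pBM Mm1) Mm2).
- by rewrite mulrC; apply: (properMl pBM (subringM srB Bv Br2) Mm1).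
- exact: (properMl pBM (subringM srB Bu Br1) Mm2).
- exact: (properMl pBM (subringM srB Br1 Br2) Muv).
Qed.

Lemma maximal_primeX b i : B b -> ~ M b -> ~ M (b ^+ i).
Proof.
move=> Bb nMb; elim: i => [|i IH]; first by rewrite expr0; apply: proper_neq1 pBM.
by rewrite exprS; apply: maximal_primeM => //; apply: (subringX srB).
Qed.

(* Otherwise [(B[f], M[f])] would be a strictly larger proper pair. *)
Lemma maximal_adjoin f : ~ eval_polys M f 1 -> B f.
Proof.
move=> nMf1.
have cst S c : S 0 -> S c -> forall i, S (c%:P)`_i.
  by move=> S0 Sc i; rewrite coefC; case: ifP.
have Bcst c : B c -> eval_polys B f c.
  by move=> Bc; exists c%:P; split; [apply: cst => //; apply: subring0 srB | rewrite hornerC].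
have Mcst c : M c -> eval_polys M f c.
  by move=> Mc; exists c%:P; split; [apply: cst => //; apply: proper0 pBM | rewrite hornerC].
have pBMf : proper_ideal_of (eval_polys B f) (eval_polys M f).
  split; [split | exact: nMf1].
  - split.
    + by move=> k; apply/Bcst/(subring_cst srB).
    + move=> u v [p [Bp ->]] [p' [Bp' ->]]; exists (p - p'); split; last by rewrite hornerD hornerN.
      by move=> i; rewrite coefB; apply: (subringB srB).
    + move=> u v [p [Bp ->]] [p' [Bp' ->]]; exists (p * p'); split; last by rewrite hornerM.
      by move=> i; rewrite coefM; apply: (subring_sum srB) => j _; apply: (subringM srB).
  - by move=> w [p [Mp ->]]; exists p; split => // i; apply: proper_sub pBM _ _.
  - exact/Mcst/(proper0 pBM).
  - move=> u v [p [Mp ->]] [p' [Mp' ->]]; exists (p - p'); split; last by rewrite hornerD hornerN.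
    by move=> i; rewrite coefB; apply: (properB pBM).
  - move=> r u [p [Bp ->]] [p' [Mp' ->]]; exists (p * p'); split; last by rewrite hornerM.
    by move=> i; rewrite coefM; apply: (proper_sum pBM) => j _; apply: (properMl pBM).
have [BfB _] := maxBM pBMf Bcst Mcst.
apply: BfB; exists 'X; split; last by rewrite hornerX.
by move=> i; rewrite coefX; case: (i == 1%N); [apply: subring1 srB | apply: subring0 srB].
Qed.

Lemma maximal_inv b : B b -> ~ M b -> B b^-1.
Proof.
move=> Bb nMb; apply: maximal_adjoin => -[p [Mp e]].
have b0 : b != 0 by apply/eqP => b0; apply: nMb; rewrite b0; apply: proper0 pBM.
apply: (maximal_primeX (i := size p) Bb nMb).
have -> : b ^+ size p = \sum_(i < size p) p`_i * b ^+ (size p - i).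
  rewrite -[LHS]mulr1 e horner_coef mulr_sumr; apply: eq_bigr => i _.
  by rewrite mulrCA exprVn -expfB ?ltn_ord.
by apply: (proper_sum pBM) => i _; rewrite mulrC; apply: (properMl pBM) => //; apply: (subringX srB).
Qed.

(* One step of the classical descent: if [p.[g] = 1] and [r.[g^-1] = 1] with
   coefficients in [M] and [size r <= size p], the leading term of [p] can be
   cancelled using [r], since [1 - r`_0] is invertible in [B]. *)
Lemma maximal_reduce (g : F) (p r : {poly F}) : g != 0 -> (forall i, M p`_i) -> (forall i, M r`_i) ->
  p.[g] = 1 -> r.[g^-1] = 1 -> (size r <= size p)%N ->
  exists p' : {poly F}, [/\ forall i, M p'`_i, (size p' < size p)%N & p'.[g] = 1].
Proof.
move=> g0 Mp Mr pg rg srp.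
have nz1 (s : {poly F}) w : s.[w] = 1 -> s != 0.
  by move=> sw; apply/eqP => s0; move: sw; rewrite s0 horner0 => /eqP; rewrite eq_sym oner_eq0.
set n := (size p).-1; set k := (size r).-1.
have sp : size p = n.+1 by rewrite /n prednK // size_poly_gt0 (nz1 _ _ pg).
have sr : size r = k.+1 by rewrite /k prednK // size_poly_gt0 (nz1 _ _ rg).
have kn : (k <= n)%N by rewrite -ltnS -sr -sp.
have Br0 : B (1 - r`_0) by apply: (subringB srB); [apply: subring1 srB | exact: (proper_sub pBM (Mr 0))].
have nMr0 : ~ M (1 - r`_0).
  by move=> Mr0; apply: (proper_neq1 pBM); rewrite -(subrK (r`_0) 1); apply: (properD pBM).
set u := (1 - r`_0)^-1.
have Bu : B u := maximal_inv Br0 nMr0.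
have r0 : 1 - r`_0 != 0 by apply/eqP => e; apply: nMr0; rewrite e; apply: proper0 pBM.
pose t := \poly_(i < k) r`_(k - i).
have gt : g ^+ k * (1 - r`_0) = t.[g] by rewrite -rg horner_rev_tail.
pose p' := \poly_(i < n) p`_i + (p`_n * u)%:P * ('X^(n - k) * t).
exists p'; split.
- move=> i; rewrite coefD coef_poly coefCM coefXnM.
  apply: (properD pBM); first by case: ifP => // _; apply: proper0 pBM.
  apply: (properMl pBM); first by apply: (subringM srB) => //; exact: (proper_sub pBM (Mp n)).
  by case: ifP => _; [apply: proper0 pBM | rewrite coef_poly; case: ifP => // _; apply: proper0 pBM].
- rewrite sp ltnS; apply: leq_trans (size_polyD _ _) _; rewrite geq_max size_poly /=.
  rewrite mul_polyC; apply: leq_trans (size_scale_leq _ _) _.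
  apply: leq_trans (size_polyMleq _ _) _; rewrite size_polyXn addSn /=.
  by apply: leq_trans (leq_add (leqnn _) (size_poly _ _)) _; rewrite subnK.
- rewrite hornerD hornerM hornerC hornerM hornerXn -gt horner_poly.
  rewrite -[X in _ = X]pg horner_coef sp big_ord_recr /=; congr (_ + _).
  by rewrite [g ^+ (n - k) * _]mulrA -exprD subnK // /u; field; rewrite r0.
Qed.

Lemma maximal_not_both N (g : F) (p r : {poly F}) : g != 0 -> (size p + size r <= N)%N ->
  (forall i, M p`_i) -> (forall i, M r`_i) -> p.[g] = 1 -> r.[g^-1] = 1 -> False.
Proof.
elim: N g p r => [|N IH] g p r g0 spr Mp Mr pg rg.
  move: spr; rewrite leqn0 addn_eq0 size_poly_eq0 => /andP[/eqP p0 _].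
  by move: pg; rewrite p0 horner0 => /eqP; rewrite eq_sym oner_eq0.
case: (leqP (size r) (size p)) => srp.
  have [p' [Mp' sp' p'g]] := maximal_reduce g0 Mp Mr pg rg srp.
  by apply: (IH g p' r) => //; rewrite -ltnS; apply: leq_trans spr; rewrite ltn_add2r.
have g'0 : g^-1 != 0 by rewrite invr_eq0.
have pg' : p.[g^-1^-1] = 1 by rewrite invrK.
have [r' [Mr' sr' r'g]] := maximal_reduce g'0 Mr Mp rg pg' (ltnW srp).
apply: (IH g^-1 r' p) => //; rewrite -ltnS; apply: leq_trans spr.
by rewrite addnC ltn_add2l.
Qed.

Lemma maximal_total f : f != 0 -> B f \/ B f^-1.
Proof.
move=> f0; case: (pselect (B f)) => Bf; [by left | right].
case: (pselect (B f^-1)) => // Bf'; exfalso.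
have [p [Mp /esym pf]] : eval_polys M f 1.
  by case: (pselect (eval_polys M f 1)) => // nMf; case: Bf; apply: maximal_adjoin.
have [r [Mr /esym rf]] : eval_polys M f^-1 1.
  by case: (pselect (eval_polys M f^-1 1)) => // nMf; case: Bf'; apply: maximal_adjoin.
exact: (maximal_not_both f0 (leqnn _) Mp Mr pf rf).
Qed.

End MaximalPair.

Section Zorn.
Variables (B0 I0 : set F) (pBI0 : proper_ideal_of B0 I0).

Let dominating :=
  {BI : set F * set F | proper_ideal_of BI.1 BI.2 /\ (B0 `<=` BI.1 /\ I0 `<=` BI.2)%classic}.
Let part (b : bool) (s : dominating) : set F := if b then (sval s).1 else (sval s).2.
Let le_pair : rel dominating := fun s t => `[< forall b, (part b s `<=` part b t)%classic >].

Let le_pairP s t : reflect (forall b, (part b s `<=` part b t)%classic) (le_pair s t).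
Proof. exact: asboolP. Qed.
Let le_pair_refl s : le_pair s s. Proof. by apply/le_pairP => b u. Qed.
Let le_pair_trans r s t : le_pair r s -> le_pair s t -> le_pair r t.
Proof. by move=> /le_pairP rs /le_pairP st; apply/le_pairP => b u /(rs b) /(st b). Qed.
Let part_proper s : proper_ideal_of (part true s) (part false s). Proof. exact: (svalP s).1. Qed.

Let base : dominating := exist _ (B0, I0) (conj pBI0 (conj (fun _ h => h) (fun _ h => h))).
Let base_le s : le_pair base s.
Proof. by have [_ [B0s I0s]] := svalP s; apply/le_pairP; case. Qed.

Section Chain.
Variables (A : set dominating) (totA : total_on A le_pair).

Let A' := (A `|` [set base])%classic.
Let union b : set F := [set u | exists2 s, A' s & part b s u]%classic.

Let union_common b1 b2 u v : union b1 u -> union b2 v ->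
  exists s, [/\ A' s, part b1 s u & part b2 s v].
Proof.
move=> [s A's su] [t A't tv].
have [/le_pairP st | /le_pairP ts] : le_pair s t \/ le_pair t s.
  case: A's A't => [As|->] [At|->]; [exact: totA | right | left | left]; exact: base_le.
- by exists t; split => //; apply: st.
- by exists s; split => //; apply: ts.
Qed.

Let union_proper : proper_ideal_of (union true) (union false).
Proof.
have A'base : A' base by right.
split; [split; first split | ].
- by move=> k; exists base => //; exact: (subring_cst (proper_subring pBI0) k).
- move=> u v /union_common /[apply] -[s [A's su sv]]; exists s => //.
  exact: (subringB (proper_subring (part_proper s)) su sv).
- move=> u v /union_common /[apply] -[s [A's su sv]]; exists s => //.
  exact: (subringM (proper_subring (part_proper s)) su sv).
- by move=> u [s A's su]; exists s => //; apply: proper_sub (part_proper s) _ su.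
- by exists base => //; apply: proper0 pBI0.
- move=> u v /union_common /[apply] -[s [A's su sv]]; exists s => //.
  exact: (properB (part_proper s) su sv).
- move=> r u /union_common /[apply] -[s [A's sr su]]; exists s => //.
  exact: (properMl (part_proper s) sr su).
- by move=> [s _ s1]; apply: proper_neq1 (part_proper s) s1.
Qed.

Lemma chain_upper_bound : exists t, forall s, A s -> le_pair s t.
Proof.
have dom : (B0 `<=` union true /\ I0 `<=` union false)%classic.
  by split => u u0; exists base => //; right.
exists (exist _ (union true, union false) (conj union_proper dom)) => s As.
by apply/le_pairP => -[] u su; exists s => //; left.
Qed.

End Chain.

Theorem chevalley_extension : exists O : set F, [/\ subring_over iota O,
   (forall f, f != 0 -> O f \/ O f^-1) & (I0 `<=` max_ideal O)%classic].
Proof.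
have [[[B M] [pBM [B0B I0M]]] maxBM] := ZL_preorder base le_pair_refl le_pair_trans chain_upper_bound.
exists B; split; first exact: proper_subring pBM.
- apply: (maximal_total pBM) => B' I' pBI' BB' MI'.
  have dom : (B0 `<=` B' /\ I0 `<=` I')%classic by split => u u0; [apply/BB'/B0B | apply/MI'/I0M].
  have /maxBM /le_pairP le : le_pair (exist _ (B, M) (conj pBM (conj B0B I0M)))
      (exist _ (B', I') (conj pBI' dom)) by apply/le_pairP; case.
  by split; [exact: le true | exact: le false].
- move=> f /I0M Mf; split; first exact: proper_sub pBM _ Mf.
  have [->|f0] := eqVneq f 0; [by left | right => Bf'].
  by apply: (proper_neq1 pBM); rewrite -(mulfV f0) mulrC; apply: (properMl pBM).
Qed.
End Zorn.
End Chevalley.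

(** * Places of the curve above P_αβ *)

Lemma poly_drop1E (R : nzRingType) (p : {poly R}) : p = (p`_0)%:P + drop_poly 1 p * 'X.
Proof.
rewrite -{1}(poly_take_drop 1 p) expr1; congr (_ + _).
by apply/polyP => i; rewrite coef_take_poly coefC; case: i.
Qed.

Section Curve.
Variables (K : finFieldType) (F : fieldType) (iota : {rmorphism K -> F}).
Variables (q m : nat) (x y z : F) (al be : K).
Hypothesis q_ge2 : (2 <= q)%N.
Hypothesis charF : [pchar F].-nat q.
Hypothesis m_gt0 : (0 < m)%N.
Hypothesis x_transcendental : forall P : {poly K}, P != 0 -> (map_poly iota P).[x] != 0.
Hypothesis hxy : x ^+ q + x = y ^+ q.+1.
Hypothesis hyz : z ^+ m = y ^+ (q ^ 2) - y.
Hypothesis hab : al ^+ q + al = be ^+ q.+1.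
Hypothesis hbe : be ^+ (q ^ 2) = be.
Hypothesis genF : gen_subfield iota [:: x; y; z] = setT.

Definition xa := x - iota al.
Definition yb := y - iota be.
Definition ux := xa ^+ (q - 1) + 1.
Definition uy := yb ^+ (q ^ 2 - 1) - 1.
Definition sy := iota (be ^+ q) + iota be * yb ^+ (q - 1) + yb ^+ q.

Let expr_pred (u : F) n : (0 < n)%N -> u ^+ n = u * u ^+ (n - 1).
Proof. by move=> n_gt0; rewrite -exprS subn1 prednK. Qed.

(* The curve equations translated to (α, β), using additivity of [_ ^+ q] and [_ ^+ q ^ 2]:
   both [ux] and [uy] are units at every place above [P_αβ]. *)
Lemma xa_ux : xa * ux = yb * sy.
Proof.
have q_gt0 : (0 < q)%N by apply: leq_trans q_ge2.
rewrite /ux mulrDr mulr1 -expr_pred // /xa exprDn_pchar // exprNn_pchar // -rmorphXn.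
have yE : y = iota be + yb by rewrite /yb addrC subrK.
have -> : x ^+ q - iota (al ^+ q) + (x - iota al) = y ^+ q.+1 - iota (be ^+ q.+1).
  by rewrite -hxy -hab rmorphD; ring.
rewrite exprSr {1 2}yE exprDn_pchar // /sy !rmorphXn (expr_pred yb q_gt0) [iota be ^+ q.+1]exprSr.
ring.
Qed.

Lemma yb_uy : yb * uy = z ^+ m.
Proof.
have q2_gt0 : (0 < q ^ 2)%N by rewrite expn_gt0 (@leq_trans 2).
have charF2 : [pchar F].-nat (q ^ 2)%N by rewrite pnatX charF.
rewrite /uy mulrBr mulr1 -expr_pred // hyz /yb exprDn_pchar // exprNn_pchar // -rmorphXn hbe.
ring.
Qed.

Let coord := gen_subring iota [:: x; y; z].
Let srA : subring_over iota coord := gen_subring_subring iota [:: x; y; z].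

Lemma coord_x : coord x. Proof. by apply: gen_subring_mem; rewrite inE eqxx. Qed.
Lemma coord_y : coord y. Proof. by apply: gen_subring_mem; rewrite !inE eqxx orbT. Qed.
Lemma coord_z : coord z. Proof. by apply: gen_subring_mem; rewrite !inE eqxx !orbT. Qed.
Lemma coord_min S : subring_over iota S -> S x -> S y -> S z -> forall f, coord f -> S f.
Proof. by move=> srS Sx Sy Sz f; apply; rewrite // => t; rewrite !inE => /or3P[] /eqP ->. Qed.

Lemma coord_xa : coord xa. Proof. by apply: (subringB srA) (coord_x) (subring_cst srA _). Qed.
Lemma coord_yb : coord yb. Proof. by apply: (subringB srA) (coord_y) (subring_cst srA _). Qed.
Lemma coord_ux : coord ux.
Proof. by apply: (subringD srA) (subringX srA _ coord_xa) (subring1 srA). Qed.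
Lemma coord_uy : coord uy.
Proof. by apply: (subringB srA) (subringX srA _ coord_yb) (subring1 srA). Qed.
Lemma coord_sy : coord sy.
Proof.
apply: (subringD srA) (subringX srA _ coord_yb).
exact: (subringD srA) (subring_cst srA _) (subringM srA (subring_cst srA _) (subringX srA _ coord_yb)).
Qed.

Lemma coord_decomp N : coord N ->
  exists c a b e, [/\ coord a, coord b, coord e & N = iota c + xa * a + yb * b + z * e].
Proof.
pose D : set F := fun N =>
  exists c a b e, [/\ coord a, coord b, coord e & N = iota c + xa * a + yb * b + z * e].
have A0 := subring0 srA; have A1 := subring1 srA.
apply: (coord_min (S := D)).
- split.
  + by move=> k; exists k, 0, 0, 0; split => //; ring.
  + move=> u v [c [a [b [e [Aa Ab Ae ->]]]]] [c' [a' [b' [e' [Aa' Ab' Ae' ->]]]]].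
    exists (c - c'), (a - a'), (b - b'), (e - e'); split; try exact: (subringB srA).
    by rewrite rmorphB; ring.
  + move=> u v [c [a [b [e [Aa Ab Ae ->]]]]] [c' [a' [b' [e' [Aa' Ab' Ae' ->]]]]].
    set j' := xa * a' + yb * b' + z * e'.
    have Aj' : coord j'.
      by apply: (subringD srA); [apply: (subringD srA)|]; apply: (subringM srA) => //;
        [exact: coord_xa | exact: coord_yb | exact: coord_z].
    have Acomb w w' : coord w -> coord w' -> coord (iota c * w' + iota c' * w + w * j').
      move=> Aw Aw'; apply: (subringD srA); last exact: (subringM srA).
      by apply: (subringD srA); apply: (subringM srA) => //; apply: (subring_cst srA).
    exists (c * c'), (iota c * a' + iota c' * a + a * j'), (iota c * b' + iota c' * b + b * j'),
      (iota c * e' + iota c' * e + e * j').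
    by split; try exact: Acomb; rewrite rmorphM /j'; ring.
- by exists al, 1, 0, 0; split => //; rewrite /xa; ring.
- by exists be, 0, 1, 0; split => //; rewrite /yb; ring.
- by exists 0, 0, 0, 1; split => //; rewrite rmorph0; ring.
Qed.

Definition evaly : {rmorphism {poly K} -> F} := horner_morph (fun t : K => mulrC y (iota t)).
Lemma evalyE p : evaly p = (map_poly iota p).[y]. Proof. by []. Qed.
Lemma evalyX : evaly 'X = y. Proof. exact: horner_morphX. Qed.
Lemma evalyC c : evaly c%:P = iota c. Proof. exact: horner_morphC. Qed.
Lemma coord_evaly p : coord (evaly p).
Proof.
rewrite evalyE; apply: (subring_horner srA); last exact: coord_y.
by move=> i; rewrite coef_map; apply: (subring_cst srA).
Qed.

Lemma coord_integral N : coord N -> integralOver evaly N.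
Proof.
have srI : subring_over iota [set f | integralOver evaly f]%classic.
  split => /=.
  - by move=> k; rewrite -evalyC; apply: integral_id.
  - by move=> u v; apply: integral_sub.
  - by move=> u v; apply: integral_mul.
have integral_evaly p : integralOver evaly (evaly p) by apply: integral_id.
apply: (coord_min srI).
- apply: (@integral_root_monic _ _ evaly x ('X^q + ('X - (y ^+ q.+1)%:P))).
  + by rewrite monicE lead_coefDl ?lead_coefXn // size_XsubC size_polyXn ltnS.
  + by apply/eqP; rewrite hornerD hornerXn hornerXsubC -hxy addrA subrr.
  + apply/integral_poly => i; rewrite coefD coefXn coefB coefX coefC.
    apply: integral_add; first exact: integral_nat.
    apply: integral_sub; first exact: integral_nat.
    by case: (i == 0%N); [by have := integral_evaly ('X ^+ q.+1); rewrite rmorphXn evalyX | exact: integral0].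
- by have := integral_evaly 'X; rewrite evalyX.
- apply: (@integral_root_monic _ _ evaly z ('X^m - (y ^+ (q ^ 2) - y)%:P)).
  + exact: monicXnsubC.
  + by apply/eqP; rewrite !hornerE hyz subrr.
  + apply/integral_poly => i; rewrite coefB coefXn coefC.
    apply: integral_sub; first exact: integral_nat.
    case: (i == 0%N); last exact: integral0.
    by have := integral_evaly ('X ^+ (q ^ 2) - 'X); rewrite rmorphB rmorphXn evalyX.
Qed.

Lemma horner_evaly_drop1 (p : {poly {poly K}}) (N : F) :
  (map_poly evaly p).[N] = evaly p`_0 + N * (map_poly evaly (drop_poly 1 p)).[N].
Proof.
rewrite {1}(poly_drop1E p) rmorphD rmorphM /= map_polyC map_polyX !hornerE.
by rewrite mulrC.
Qed.

(* The constant term of a minimal integral equation of [N] over [K[y]]. *)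
Lemma coord_norm N : coord N -> N != 0 ->
  exists2 c0 : {poly K}, c0 != 0 & exists2 w, coord w & evaly c0 = N * w.
Proof.
move=> AN N0; have [p mp rp] := coord_integral AN.
have p0 : p != 0 := monic_neq0 mp.
have [n sp] := ubnP (size p).
elim: n p sp p0 rp {mp} => // n IH p sp p0 rp.
have e := horner_evaly_drop1 p N.
have Aw : coord (map_poly evaly (drop_poly 1 p)).[N].
  by apply: (subring_horner srA) => // i; rewrite coef_map; apply: coord_evaly.
have [p00|p00] := eqVneq p`_0 0; last first.
  exists p`_0 => //; exists (- (map_poly evaly (drop_poly 1 p)).[N]); first exact: (subringN srA).
  by apply/eqP; rewrite mulrN -subr_eq0 opprK -e.
have d0 : drop_poly 1 p != 0.
  by apply: contraNneq p0 => d0; rewrite (poly_drop1E p) d0 p00 mul0r addr0.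
apply: (IH (drop_poly 1 p)) => //.
  by rewrite size_drop_poly subn1 -ltnS prednK ?size_poly_gt0.
by move: rp; rewrite /root e p00 rmorph0 add0r mulf_eq0 (negPf N0).
Qed.

Lemma frac_coord f : exists N D, [/\ coord N, coord D & f = N / D].
Proof.
pose S : set F := fun f => exists N D, [/\ coord N, coord D & f = N / D].
have SA u : coord u -> S u by move=> Au; exists u, 1; split; rewrite ?divr1 //; apply: (subring1 srA).
have sfS : subfield_over iota S.
  split.
  - by move=> k; apply: SA; apply: (subring_cst srA).
  - move=> u v [N [D [AN AD ->]]] [N' [D' [AN' AD' ->]]].
    have [D0|D0] := eqVneq D 0.
      by exists (- N'), D'; split; rewrite ?D0 ?invr0 ?mulr0 ?sub0r ?mulNr //; apply: (subringN srA).
    have [D'0|D'0] := eqVneq D' 0.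
      by exists N, D; split; rewrite // D'0 invr0 mulr0 subr0.
    exists (N * D' - N' * D), (D * D'); split.
    + by apply: (subringB srA); apply: (subringM srA).
    + exact: (subringM srA).
    + by field; rewrite D0 D'0.
  - move=> u v [N [D [AN AD ->]]] [N' [D' [AN' AD' ->]]].
    exists (N * N'), (D * D'); split; try exact: (subringM srA).
    by rewrite invfM; ring.
  - move=> u [N [D [AN AD ->]]]; exists D, N; split => //.
    by rewrite invfM invrK mulrC.
have /(_ S sfS) : gen_subfield iota [:: x; y; z] f by rewrite genF.
by apply=> t; rewrite !inE => /or3P[] /eqP ->; apply: SA; [exact: coord_x | exact: coord_y | exact: coord_z].
Qed.

Lemma xa_neq0 : xa != 0.
Proof.
have := x_transcendental (P := 'X - al%:P); rewrite polyXsubC_eq0 => /(_ isT).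
by rewrite map_polyXsubC hornerXsubC.
Qed.

Section PlaceAbove.
Variables (O : set F) (vO : valuation_ring iota setT O).
Hypotheses (mxa : max_ideal O xa) (myb : max_ideal O yb).
Let srO := valuation_subring vO.
Let sfT := subfield_setT iota.

Lemma vunit_ux : vunit O ux.
Proof.
have q1_gt0 : (0 < q - 1)%N by rewrite subn_gt0.
by rewrite /ux addrC; apply: (vunitD sfT vO (vunit1 vO) (max_idealX vO mxa q1_gt0)).
Qed.

Lemma vunit_uy : vunit O uy.
Proof.
have q21_gt0 : (0 < q ^ 2 - 1)%N.
  by rewrite subn_gt0 (@leq_trans 2) // (@leq_trans (2 ^ 2)) // leq_exp2r.
rewrite /uy addrC; apply: (vunitD sfT vO (vunitN vO (vunit1 vO)) (max_idealX vO myb q21_gt0)).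
Qed.

Lemma max_ideal_z : max_ideal O z.
Proof.
have mzm : max_ideal O (z ^+ m).
  by rewrite -yb_uy mulrC; apply: (max_idealMl vO) => //; case: vunit_uy.
have Oz : O z.
  case: (pselect (O z)) => // nOz; exfalso.
  have z0 : z != 0 by apply: contra_not_neq nOz => ->; apply: (subring0 srO).
  have [//|Oz'] := valuation_total vO (I : setT z) (elimN eqP z0).
  apply: (max_ideal1 vO); rewrite -(mulVf (expf_neq0 m z0)) -exprVn.
  by apply: (max_idealMl vO) => //; apply: (subringX srO).
split => //; case: (pselect (z = 0)) => [->|z0]; [by left | right => Oz'].
apply: (max_ideal_inv mzm); first by apply/eqP; rewrite expf_neq0 //; apply/eqP.
by rewrite -exprVn; apply: (subringX srO).
Qed.

Lemma coord_sub_valuation f : coord f -> O f.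
Proof.
have Ocst k : O (iota k) by apply: (subring_cst srO).
apply: (coord_min srO).
- by rewrite -(subrK (iota al) x); apply: (subringD srO) (max_ideal_sub mxa) (Ocst _).
- by rewrite -(subrK (iota be) y); apply: (subringD srO) (max_ideal_sub myb) (Ocst _).
- exact: max_ideal_sub max_ideal_z.
Qed.

Lemma z_neq0 : z != 0.
Proof.
apply: contra_neq xa_neq0 => z0.
have : yb * uy = 0 by rewrite yb_uy z0 expr0n eqn0Ngt m_gt0.
move/eqP; rewrite mulf_eq0 (negPf (vunit_neq0 vO vunit_uy)) orbF => /eqP yb0.
have : xa * ux = 0 by rewrite xa_ux yb0 mul0r.
by move/eqP; rewrite mulf_eq0 (negPf (vunit_neq0 vO vunit_ux)) orbF => /eqP.
Qed.

Lemma vunit_coord c a b e : c != 0 -> coord a -> coord b -> coord e ->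
  vunit O (iota c + xa * a + yb * b + z * e).
Proof.
move=> c0 Aa Ab Ae; rewrite -!addrA; apply: (vunitD sfT vO (vunit_cst vO c0)).
have mM u w : max_ideal O u -> coord w -> max_ideal O (u * w).
  by move=> mu Aw; rewrite mulrC; apply: (max_idealMl vO) => //; apply: coord_sub_valuation.
by apply: (max_idealD sfT vO); [exact: mM | apply: (max_idealD sfT vO); apply: mM => //; exact: max_ideal_z].
Qed.

End PlaceAbove.

Section TwoPlacesAbove.
Variables (O1 O2 : set F) (vO1 : valuation_ring iota setT O1) (vO2 : valuation_ring iota setT O2).
Hypotheses (mxa1 : max_ideal O1 xa) (myb1 : max_ideal O1 yb).
Hypotheses (mxa2 : max_ideal O2 xa) (myb2 : max_ideal O2 yb).

Let vunit2 u := vunit O1 u /\ vunit O2 u.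

Let vunit2M u v : vunit2 u -> vunit2 v -> vunit2 (u * v).
Proof. by move=> [u1 u2] [v1 v2]; split; [exact: (vunitM vO1 u1 v1) | exact: (vunitM vO2 u2 v2)]. Qed.
Let vunit2V u : vunit2 u -> vunit2 u^-1.
Proof. by move=> [u1 u2]; split; [exact: (vunitV vO1 u1) | exact: (vunitV vO2 u2)]. Qed.
Let vunit2_uxuy : vunit2 (ux * uy).
Proof.
split; first exact: (vunitM vO1 (vunit_ux vO1 mxa1) (vunit_uy vO1 myb1)).
exact: (vunitM vO2 (vunit_ux vO2 mxa2) (vunit_uy vO2 myb2)).
Qed.

(* Peeling off the constant term: if it vanishes, [N] is divisible by [z] inside
   [coord], up to the unit [ux * uy], thanks to [xa_ux] and [yb_uy]. *)
Lemma coord_zfactor_or_zdvd j N : coord N ->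
  (exists k u, vunit2 u /\ N = z ^+ k * u) \/
  (exists N' w, [/\ coord N', vunit2 w & N = z ^+ j * N' * w]).
Proof.
move=> AN; elim: j => [|j IH].
  right; exists N, 1; split; rewrite ?expr0 ?mul1r ?mulr1 //.
  by split; [exact: (vunit1 vO1) | exact: (vunit1 vO2)].
case: IH => [|[N' [w [AN' w2 eN]]]]; first by left.
have [c [a [b [e [Aa Ab Ae eN']]]]] := coord_decomp AN'.
rewrite {}eN {N' AN'}eN'.
have [c0|c0] := eqVneq c 0; last first.
  left; exists j, ((iota c + xa * a + yb * b + z * e) * w); split; last by rewrite mulrA.
  by apply: vunit2M => //; split; apply: vunit_coord.
right; pose N'' := z ^+ (m - 1) * (sy * a + b * ux) + e * ux * uy.
exists N'', (w * (ux * uy)^-1); split; last 1 first.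
- have zm : z * z ^+ (m - 1) = yb * uy by rewrite -exprS subn1 prednK // yb_uy.
  have zN'' : (xa * a + yb * b + z * e) * (ux * uy) = z * N''.
    rewrite /N'' [RHS]mulrDr [z * (z ^+ _ * _)]mulrA zm.
    transitivity (xa * ux * a * uy + yb * b * ux * uy + z * e * ux * uy); first by ring.
    by rewrite xa_ux; ring.
  have uxuy0 : ux * uy != 0 := vunit_neq0 vO1 vunit2_uxuy.1.
  rewrite c0 rmorph0 add0r -[xa * a + _ + _](mulfK uxuy0) zN'' exprSr.
  by ring.
- apply: (subringD srA); last by apply: (subringM srA) coord_uy; apply: (subringM srA) Ae coord_ux.
  apply: (subringM srA) (subringX srA _ coord_z) _.
  by apply: (subringD srA); apply: (subringM srA) => //; [exact: coord_sy | exact: coord_ux].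
- exact: vunit2M w2 (vunit2V vunit2_uxuy).
Qed.

(* [N] divides some [c0] in [K[y]]; writing [c0 = (y - β)^r w'] with [w'(β) != 0], the
   z-exponent of [c0] is [m r], so the descent cannot reach [z^(m r + 1)]. *)
Lemma coord_zfactor N : coord N -> N != 0 -> exists k u, vunit2 u /\ N = z ^+ k * u.
Proof.
move=> AN N0; have [c0 c00 [w0 Aw0 e0]] := coord_norm AN N0.
have [r [w' w'be ec0]] := multiplicity_XsubC c0 be.
rewrite c00 /= in w'be.
have ybE : evaly ('X - be%:P) = yb by rewrite rmorphB /= evalyX evalyC.
have w'1 : vunit O1 (evaly w').
  have /factor_theorem [q' eq'] : root (w' - (w'.[be])%:P) be.
    by rewrite /root hornerD hornerN hornerC subrr.
  have -> : evaly w' = iota w'.[be] + evaly q' * yb.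
    by rewrite -evalyC -ybE -rmorphM -rmorphD -eq' addrC subrK.
  apply: (vunitD (subfield_setT iota) vO1 (vunit_cst vO1 w'be)).
  by apply: (max_idealMl vO1) myb1; apply: coord_sub_valuation vO1 mxa1 myb1 _ (coord_evaly q').
have [//|[N' [w [AN' [[Ow _] _] eN]]]] := coord_zfactor_or_zdvd (m * r).+1 AN.
exfalso; case: w'1 => _; apply.
have z0 := z_neq0 vO1 mxa1 myb1.
have : evaly w' * z ^+ (m * r) = z ^+ (m * r) * (z * (N' * w * w0 * uy ^+ r)).
  have c0E : evaly c0 = evaly w' * yb ^+ r by rewrite ec0 rmorphM rmorphXn ybE.
  rewrite [in LHS]exprM -[in LHS]yb_uy [in LHS]exprMn [in LHS]mulrA -c0E e0 eN exprSr.
  by ring.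
rewrite [LHS]mulrC => /(mulfI (expf_neq0 _ z0)) ->.
rewrite mulrC; apply: (max_idealMl vO1) (max_ideal_z vO1 myb1).
have OA := coord_sub_valuation vO1 mxa1 myb1.
apply: (subringM (valuation_subring vO1)); last first.
  by apply: (subringX (valuation_subring vO1)); case: (vunit_uy vO1 myb1).
apply: (subringM (valuation_subring vO1)) (OA _ Aw0).
exact: (subringM (valuation_subring vO1)) (OA _ AN') Ow.
Qed.

(* Since [F] is the fraction field of [coord], write [f] as [z^k u / z^l u'] with units [u], [u']. *)
Lemma valuation_ring_sub f : O1 f -> O2 f.
Proof.
move=> O1f; have [N [D [AN AD ef]]] := frac_coord f.
have srO1 := valuation_subring vO1; have srO2 := valuation_subring vO2.
have [N0|N0] := eqVneq N 0; first by rewrite ef N0 mul0r; apply: (subring0 srO2).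
have [D0|D0] := eqVneq D 0; first by rewrite ef D0 invr0 mulr0; apply: (subring0 srO2).
have [k [u [[u1 u2] eN]]] := coord_zfactor AN N0.
have [l [u' [[u'1 u'2] eD]]] := coord_zfactor AD D0.
have z0 := z_neq0 vO1 mxa1 myb1.
have u0 := vunit_neq0 vO1 u1; have u'0 := vunit_neq0 vO1 u'1.
case: (leqP l k) => lk.
  have -> : f = z ^+ (k - l) * (u * u'^-1).
    by rewrite ef eN eD -(subnK lk) exprD subnK //; field; rewrite u'0 expf_neq0.
  apply: (subringM srO2); first exact: (subringX srO2) (max_ideal_sub (max_ideal_z vO2 myb2)).
  by apply: (subringM srO2); [case: u2 | case: (vunitV vO2 u'2)].
exfalso; apply: (max_ideal_inv (max_ideal_z vO1 myb1)); first exact/eqP.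
have -> : z^-1 = f * z ^+ (l - k.+1) * u' * u^-1.
  rewrite ef eN eD -[in z ^+ l](subnK lk) exprD exprS.
  by field; rewrite u0 u'0 z0 !expf_neq0.
apply: (subringM srO1); last by case: (vunitV vO1 u1).
apply: (subringM srO1); last by case: u'1.
exact: (subringM srO1) O1f (subringX srO1 _ (max_ideal_sub (max_ideal_z vO1 myb1))).
Qed.

End TwoPlacesAbove.
End Curve.

(** * Places fixed by g *)

Section PlaceExtension.
Variables (K : finFieldType) (F : fieldType) (iota : {rmorphism K -> F}).
Variables (E OE : set F) (sfE : subfield_over iota E) (vOE : valuation_ring iota E OE).

Lemma valuation_inv_max_ideal f : E f -> ~ OE f -> max_ideal OE f^-1.
Proof.
move=> Ef nOf.
have f0 : f <> 0 by move=> f0; apply: nOf; rewrite f0; apply: (subring0 (valuation_subring vOE)).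
have [//|Of'] := valuation_total vOE Ef f0.
by split => //; right; rewrite invrK.
Qed.

Lemma max_ideal_not_in O f : (max_ideal OE `<=` max_ideal O)%classic -> E f -> ~ OE f -> ~ O f.
Proof.
move=> mxO Ef nOEf.
have f0 : f != 0 by apply: contra_not_neq nOEf => ->; exact: (subring0 (valuation_subring vOE)).
by have [_ [/eqP|]] := mxO _ (valuation_inv_max_ideal Ef nOEf); rewrite ?invr_eq0 ?(negPf f0) // invrK.
Qed.

Lemma max_ideal_proper : proper_ideal_of iota OE (max_ideal OE).
Proof.
split; [split | exact: (max_ideal1 vOE)].
- exact: (valuation_subring vOE).
- by move=> u; apply: max_ideal_sub.
- exact: (max_ideal0 vOE).
- by move=> u v; exact: (max_idealB sfE vOE).
- by move=> r u; exact: (max_idealMl vOE).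
Qed.

Lemma valuation_ring_extend : exists O, valuation_ring iota setT O /\
  (max_ideal OE `<=` max_ideal O)%classic.
Proof.
have [O [srO totO mxO]] := chevalley_extension max_ideal_proper.
exists O; split => //; split => //.
- exact: (subring_cst srO).
- by move=> u v Ou Ov; split; [exact: (subringB srO Ou Ov) | exact: (subringM srO Ou Ov)].
- have [_ _ _ [f [Ef nOEf]] _] := vOE.
  by exists f; split => //; apply: (max_ideal_not_in mxO Ef nOEf).
- by move=> f _ /eqP; apply: totO.
Qed.

Lemma is_place_restrict O : valuation_ring iota setT O ->
  (max_ideal OE `<=` max_ideal O)%classic -> is_place iota E (max_ideal O `&` E)%classic.
Proof.
move=> vO mxO; have srO := valuation_subring vO; have srE := subfield_subring sfE.
have [_ _ _ [f [Ef nOEf]] _] := vOE.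
have nOf := max_ideal_not_in mxO Ef nOEf.
exists (O `&` E)%classic; split.
  split.
  - by move=> u [].
  - by move=> k; split; [exact: (subring_cst srO) | exact: (subring_cst srE)].
  - move=> u v [Ou Eu] [Ov Ev]; split; split.
    + exact: (subringB srO Ou Ov).
    + exact: (subringB srE Eu Ev).
    + exact: (subringM srO Ou Ov).
    + exact: (subringM srE Eu Ev).
  - by exists f; split => // -[].
  - move=> u Eu u0; have [Ou|Ou'] := valuation_total vO (I : setT u) u0; [left | right] => //.
    by split => //; exact: (subfieldV sfE Eu).
apply/seteqP; split => u /=.
- by case=> -[Ou Ou'] Eu; split; [split | case: Ou' => [->|nOu']; [left | right => -[]]].
- case=> -[Ou Eu] Ou'; split => //; split => //.
  by case: Ou' => [->|nOu']; [left | right => Ou'; apply: nOu'; split => //; exact: (subfieldV sfE Eu)].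
Qed.

End PlaceExtension.

Section Automorphism.
Variables (K : finFieldType) (F : fieldType) (iota : {rmorphism K -> F}).
Variables (g : {rmorphism F -> F}) (g_bij : bijective g) (gK : forall t : K, g (iota t) = iota t).

Lemma max_ideal_comap O f : max_ideal [set u | O (g u)]%classic f <-> max_ideal O (g f).
Proof.
rewrite /max_ideal /= fmorphV; split; case=> Ogf Ogf'; split => //.
- by case: Ogf' => [->|]; [left; rewrite rmorph0 | right].
- by case: Ogf' => [/eqP|]; [rewrite fmorph_eq0 => /eqP ->; left | right].
Qed.

Lemma valuation_ring_comap O : valuation_ring iota setT O ->
  valuation_ring iota setT [set u | O (g u)]%classic.
Proof.
move=> vO; have srO := valuation_subring vO; have [g' _ g'K] := g_bij.
split => //=.
- by move=> k; rewrite gK; apply: (subring_cst srO).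
- by move=> u v Ou Ov; rewrite rmorphB rmorphM; split; [exact: (subringB srO) | exact: (subringM srO)].
- by have [_ _ _ [w [_ nOw]] _] := vO; exists (g' w); split => //; rewrite g'K.
- move=> f _ f0; rewrite fmorphV; apply: (valuation_total vO) => //.
  by apply/eqP; rewrite fmorph_eq0; apply/eqP.
Qed.

Lemma image_max_ideal O : (forall f, O (g f) <-> O f) -> (g @` max_ideal O)%classic = max_ideal O.
Proof.
move=> gO; have [g' _ g'K] := g_bij.
have mxg f : max_ideal O (g f) <-> max_ideal O f.
  rewrite /max_ideal /= -fmorphV !gO (rwP eqP) fmorph_eq0 -(rwP eqP).
  by split.
apply/seteqP; split => f /=.
- by case=> u mu <-; apply/mxg.
- by move=> mf; exists (g' f); rewrite ?g'K //; apply/mxg; rewrite g'K.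
Qed.

End Automorphism.

Section FixedPlaces.
Variables (K : finFieldType) (F : fieldType) (iota : {rmorphism K -> F}).
Variables (q m : nat) (x y z : F) (a b c : K) (g : {rmorphism F -> F}).
Hypothesis q_ge2 : (2 <= q)%N.
Hypothesis charF : [pchar F].-nat q.
Hypothesis m_gt0 : (0 < m)%N.
Hypothesis x_transcendental : forall P : {poly K}, P != 0 -> (map_poly iota P).[x] != 0.
Hypothesis genF : gen_subfield iota [:: x; y; z] = setT.
Hypothesis hxy : x ^+ q + x = y ^+ q.+1.
Hypothesis hyz : z ^+ m = y ^+ (q ^ 2) - y.
Hypothesis a_neq0 : a != 0.
Hypothesis g_bij : bijective g.
Hypothesis gK : forall t : K, g (iota t) = iota t.
Hypothesis gx : g x = iota (a ^+ q.+1) * x + iota (a * b ^+ q) * y + iota c.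
Hypothesis gy : g y = iota a * y + iota b.

Let E := gen_subfield iota [:: x; y].
Let sfE : subfield_over iota E := gen_subfield_subfield iota [:: x; y].
Let srE := subfield_subring sfE.
Let Ex : E x. Proof. by apply: gen_subfield_mem; rewrite inE eqxx. Qed.
Let Ey : E y. Proof. by apply: gen_subfield_mem; rewrite !inE eqxx orbT. Qed.
Let Ecst k : E (iota k). Proof. exact: (subring_cst srE). Qed.

Let gen_xy_min S : subfield_over iota S -> S x -> S y -> forall f, E f -> S f.
Proof. by move=> sfS Sx Sy f; apply; rewrite // => t; rewrite !inE => /orP[] /eqP ->. Qed.

Lemma aut_gen_xy f : E f -> E (g f).
Proof.
apply: (gen_xy_min (S := [set u | E (g u)]%classic)) => /=.
- split => /=.
  + by move=> k; rewrite gK.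
  + by move=> u v Eu Ev; rewrite rmorphB; apply: (subringB srE).
  + by move=> u v Eu Ev; rewrite rmorphM; apply: (subringM srE).
  + by move=> u Eu; rewrite fmorphV; apply: (subfieldV sfE).
- by rewrite gx; apply: (subringD srE) (Ecst _); apply: (subringD srE); apply: (subringM srE).
- by rewrite gy; apply: (subringD srE) (Ecst _); apply: (subringM srE).
Qed.

Lemma aut_gen_xy_onto f : E f -> exists2 v, E v & f = g v.
Proof.
have [y' Ey' gy'] : exists2 y', E y' & g y' = y.
  exists (iota a^-1 * (y - iota b)); first exact: (subringM srE) (Ecst _) (subringB srE Ey (Ecst _)).
  by rewrite rmorphM rmorphB gy !gK fmorphV addrK mulrA mulVf ?mul1r // fmorph_eq0.
apply: (gen_xy_min (S := [set u | exists2 v, E v & u = g v]%classic)) => /=.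
- split => /=.
  + by move=> k; exists (iota k); rewrite ?gK.
  + by move=> _ _ [u Eu ->] [v Ev ->]; exists (u - v); rewrite ?rmorphB //; apply: (subringB srE).
  + by move=> _ _ [u Eu ->] [v Ev ->]; exists (u * v); rewrite ?rmorphM //; apply: (subringM srE).
  + by move=> _ [u Eu ->]; exists u^-1; rewrite ?fmorphV //; apply: (subfieldV sfE).
- exists (iota (a ^+ q.+1)^-1 * (x - iota (a * b ^+ q) * y' - iota c)).
    apply: (subringM srE) (Ecst _) _; apply: (subringB srE) _ (Ecst _).
    by apply: (subringB srE) Ex _; apply: (subringM srE) (Ecst _) Ey'.
  rewrite !(rmorphM g, rmorphB g) gx gy' !gK !fmorphV.
  by field; rewrite fmorph_eq0 expf_neq0.
- by exists y'.
Qed.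

Section Point.
Variables (al be : K).
Local Notation Xa := (xa iota x al).
Local Notation Yb := (yb iota y be).

Lemma fixed_place_restrict :
  (exists Q, is_Q_ab iota x y al be Q /\ (g @` Q)%classic = Q) ->
  (exists P, is_P_ab iota x y al be P /\ (g @` P)%classic = P).
Proof.
move=> [Q [[_ PQ] gQ]]; exists (Q `&` E)%classic; split => //.
apply/seteqP; split => f /=.
- by case=> u [Qu Eu] <-; split; [rewrite -gQ; exists u | exact: aut_gen_xy].
- case=> Qf Ef; have [v Ev fE] := aut_gen_xy_onto Ef.
  rewrite -gQ fE in Qf; case: Qf => u Qu /(bij_inj g_bij) uv.
  by exists v; [split; rewrite // -uv | rewrite fE].
Qed.

Lemma fixed_place_linear (OP : set F) : valuation_ring iota E OP ->
  max_ideal OP Xa -> max_ideal OP Yb -> (g @` max_ideal OP)%classic = max_ideal OP ->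
  g Xa = iota (a ^+ q.+1) * Xa + iota (a * b ^+ q) * Yb /\ g Yb = iota a * Yb.
Proof.
move=> vOP mxa myb gP; have srOP := valuation_subring vOP.
have gmx u : max_ideal OP u -> max_ideal OP (g u) by move=> mu; rewrite -gP; exists u.
have mxM k u : max_ideal OP u -> max_ideal OP (iota k * u).
  by move=> mu; apply: (max_idealMl vOP) mu; apply: (subring_cst srOP).
set k1 := a ^+ q.+1 * al + a * b ^+ q * be + c - al.
set k2 := a * be + b - be.
have gXa : g Xa = iota (a ^+ q.+1) * Xa + iota (a * b ^+ q) * Yb + iota k1.
  by rewrite /xa /yb rmorphB gx gK /k1 !rmorphB !rmorphD !rmorphM; ring.
have gYb : g Yb = iota a * Yb + iota k2.
  by rewrite /yb rmorphB gy gK /k2 !rmorphB !rmorphD !rmorphM; ring.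
have k10 : k1 = 0.
  apply: (max_ideal_cst vOP).
  have -> : iota k1 = g Xa - (iota (a ^+ q.+1) * Xa + iota (a * b ^+ q) * Yb) by rewrite gXa; ring.
  by apply: (max_idealB sfE vOP (gmx _ mxa)); apply: (max_idealD sfE vOP); apply: mxM.
have k20 : k2 = 0.
  apply: (max_ideal_cst vOP).
  have -> : iota k2 = g Yb - iota a * Yb by rewrite gYb; ring.
  exact: (max_idealB sfE vOP (gmx _ myb) (mxM _ _ myb)).
by rewrite gXa gYb k10 k20 rmorph0 !addr0.
Qed.

Lemma fixed_place_extend : al ^+ q + al = be ^+ q.+1 -> be ^+ (q ^ 2) = be ->
  (exists P, is_P_ab iota x y al be P /\ (g @` P)%classic = P) ->
  (exists Q, is_Q_ab iota x y al be Q /\ (g @` Q)%classic = Q).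
Proof.
move=> hab hbe [_ [[[OP [vOP ->]] [mxa myb]] gP]].
have [gXa gYb] := fixed_place_linear vOP mxa myb gP.
have [O [vO mxO]] := valuation_ring_extend sfE vOP.
have vO' := valuation_ring_comap g_bij gK vO.
have srO := valuation_subring vO.
have mxM k u : max_ideal O u -> max_ideal O (iota k * u).
  by move=> mu; apply: (max_idealMl vO) mu; apply: (subring_cst srO).
have mxa' : max_ideal [set u | O (g u)]%classic Xa.
  by apply/max_ideal_comap; rewrite gXa; apply: (max_idealD (subfield_setT iota) vO); apply/mxM/mxO.
have myb' : max_ideal [set u | O (g u)]%classic Yb.
  by apply/max_ideal_comap; rewrite gYb; apply/mxM/mxO.
have subO := valuation_ring_sub q_ge2 charF m_gt0 x_transcendental hxy hyz hab hbe genF.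
have gO f : O (g f) <-> O f.
  split; first exact: (subO _ _ vO' vO mxa' myb' (mxO _ mxa) (mxO _ myb)).
  exact: (subO _ _ vO vO' (mxO _ mxa) (mxO _ myb) mxa' myb').
exists (max_ideal O); split; last exact: (image_max_ideal g_bij gO).
split; first by exists O.
split; first exact: (is_place_restrict sfE vOP vO mxO).
split; split; [exact: mxO | exact: (subringB srE Ex (Ecst _)) | exact: mxO |].
exact: (subringB srE Ey (Ecst _)).
Qed.

End Point.

End FixedPlaces.

Unset Implicit Arguments. Set Strict Implicit.

Theorem lemma4p1
  (p q k n : nat) (K : finFieldType) (F : fieldType) (iota : {rmorphism K -> F})
  (x y z : F) (a b c d : K) (g : {rmorphism F -> F}) :
  prime p -> (0 < k)%N -> q = (p ^ k)%N -> odd n ->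
  #|K| = (q ^ (2 * n))%N ->
  let m := ((q ^ n + 1) %/ (q + 1))%N in
  (* F is the function field C_n = F_{q^{2n}}(x,y,z) *)
  (forall P : {poly K}, P != 0 -> (map_poly iota P).[x] != 0) ->
  gen_subfield iota [:: x; y; z] = setT ->
  x ^+ q + x = y ^+ q.+1 ->
  z ^+ m = y ^+ (q ^ 2) - y ->
  (* g = [a,b,c,d] \in B(Q_infty) *)
  a ^+ (q ^ 2) = a -> a != 0 -> b ^+ (q ^ 2) = b -> c ^+ (q ^ 2) = c ->
  c ^+ q + c = b ^+ q.+1 -> d ^+ m = a ->
  bijective g -> (forall t : K, g (iota t) = iota t) ->
  g x = iota (a ^+ q.+1) * x + iota (a * b ^+ q) * y + iota c ->
  g y = iota a * y + iota b ->
  g z = iota d * z ->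
  #|[set ab : K * K | [&& ab.1 ^+ (q ^ 2) == ab.1, ab.2 ^+ (q ^ 2) == ab.2,
        ab.1 ^+ q + ab.1 == ab.2 ^+ q.+1 &
        `[< exists Q, is_Q_ab iota x y ab.1 ab.2 Q /\ (g @` Q)%classic = Q >]]]|
  = #|[set ab : K * K | [&& ab.1 ^+ (q ^ 2) == ab.1, ab.2 ^+ (q ^ 2) == ab.2,
        ab.1 ^+ q + ab.1 == ab.2 ^+ q.+1 &
        `[< exists P, is_P_ab iota x y ab.1 ab.2 P /\ (g @` P)%classic = P >]]]|.
Proof.
(* The action on [z] is irrelevant: the place above [P_αβ] is unique, hence fixed whenever [P_αβ] is. *)
move=> p_prime k_gt0 qE n_odd cardK m x_tr genF hxy hyz _ a_neq0 _ _ _ _ g_bij gK gx gy _.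
have q_ge2 : (2 <= q)%N.
  rewrite qE -(prednK k_gt0) expnS (leq_trans (prime_gt1 p_prime)) //.
  by rewrite leq_pmulr // expn_gt0 prime_gt0.
have charF : [pchar F].-nat q.
  have charK : p \in [pchar K].
    by apply: (@card_finPcharP _ p (k * (2 * n))); rewrite // expnM -qE.
  by rewrite qE pnatX (pnatE _ p_prime) (fmorph_pchar iota) charK.
have m_gt0 : (0 < m)%N.
  rewrite divn_gt0 ?addn_gt0 ?orbT // leq_add2r -[X in (X <= _)%N]expn1.
  by rewrite leq_pexp2l ?(leq_trans _ q_ge2) // lt0n; apply: contraTneq n_odd => ->.
apply: eq_card => -[al be]; rewrite !inE /=.
case: (al ^+ (q ^ 2) == al) => //=; case: eqP => //= hbe; case: eqP => //= hab.
apply: asbool_equiv_eq; split.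
- exact: (fixed_place_restrict a_neq0 g_bij gK gx gy).
- exact: (fixed_place_extend q_ge2 charF m_gt0 x_tr genF hxy hyz g_bij gK gx gy hab hbe).
Qed.
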